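(* Let $\alpha\in(0,1)$ and let $j\ge2$ be an integer, with coefficients $c_s^{(\alpha)}$, $0\le s\le j$, as defined in the context. Then $$\frac{11}{16}\cdot\frac{1-\alpha}{(j+1)^\alpha}<c_j^{(\alpha)}<\frac{1-\alpha}{j^\alpha},$$ $$c_0^{(\alpha)}>c_2^{(\alpha)}>c_3^{(\alpha)}>\dots>c_{j-1}^{(\alpha)}>c_j^{(\alpha)}\quad(\text{i.e. } c_0^{(\alpha)}>c_2^{(\alpha)} \text{ and } c_s^{(\alpha)}>c_{s+1}^{(\alpha)} \text{ for } 2\le s\le j-1),$$ $$c_0^{(\alpha)}+3c_1^{(\alpha)}-4c_2^{(\alpha)}>0.$$
   Context: For $l\ge 0$: $a_l^{(\alpha)}=(l+1)^{1-\alpha}-l^{1-\alpha}$ and $b_l^{(\alpha)}=\frac{1}{2-\alpha}\left[(l+1)^{2-\alpha}-l^{2-\alpha}\right]-\frac12\left[(l+1)^{1-\alpha}+l^{1-\alpha}\right]$. The coefficients $c_s^{(\alpha)}$ depend on $j$: for $j=2$: $c_0^{(\alpha)}=a_0^{(\alpha)}+b_0^{(\alpha)}$, $c_1^{(\alpha)}=a_1^{(\alpha)}+b_1^{(\alpha)}+b_2^{(\alpha)}-b_0^{(\alpha)}$, $c_2^{(\alpha)}=a_2^{(\alpha)}-b_2^{(\alpha)}-b_1^{(\alpha)}$; for $j\ge3$: $c_0^{(\alpha)}=a_0^{(\alpha)}+b_0^{(\alpha)}$, $c_s^{(\alpha)}=a_s^{(\alpha)}+b_s^{(\alpha)}-b_{s-1}^{(\alpha)}$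 for $1\le s\le j-2$, $c_{j-1}^{(\alpha)}=a_{j-1}^{(\alpha)}+b_{j-1}^{(\alpha)}+b_j^{(\alpha)}-b_{j-2}^{(\alpha)}$, $c_j^{(\alpha)}=a_j^{(\alpha)}-b_j^{(\alpha)}-b_{j-1}^{(\alpha)}$. *)

(* R : realType, real powers via powR (0 `^ x = 0 for x <> 0). *)
From HB Require Import structures.
From mathcomp Require Import all_boot all_order all_algebra.
From mathcomp Require Import all_classical all_reals all_analysis.
Set Implicit Arguments. Unset Strict Implicit. Unset Printing Implicit Defensive.
Import Order.TTheory GRing.Theory Num.Theory.
Local Open Scope ring_scope.

Section Coefs.
Variable R : realType.

Definition acoef (alpha : R) (l : nat) : R :=
  powR (l.+1%:R) (1 - alpha) - powR (l%:R) (1 - alpha).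

Definition bcoef (alpha : R) (l : nat) : R :=
  (2 - alpha)^-1 * (powR (l.+1%:R) (2 - alpha) - powR (l%:R) (2 - alpha))
  - 2^-1 * (powR (l.+1%:R) (1 - alpha) + powR (l%:R) (1 - alpha)).

(* c_s for a given j >= 2 (0 <= s <= j); the j = 2 case of the paper coincides
   with this uniform definition (s = 1 = j-1 branch). Value 0 for s > j. *)
Definition ccoef (alpha : R) (j s : nat) : R :=
  if s == 0%N then acoef alpha 0 + bcoef alpha 0
  else if s == j then acoef alpha j - bcoef alpha j - bcoef alpha j.-1
  else if s == j.-1 then
    acoef alpha s + bcoef alpha s + bcoef alpha j - bcoef alpha s.-1
  else if (s < j)%N then acoef alpha s + bcoef alpha s - bcoef alpha s.-1
  else 0.
End Coefs.

From HB Require Import structures.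
From mathcomp Require Import all_boot all_order all_algebra.
From mathcomp Require Import all_classical all_reals all_analysis.
Import Order.TTheory GRing.Theory Num.Theory.
From mathcomp Require Import ring lra zify.

(* With P t = t ^ (1 - al), a_l = P (l + 1) - P l is an increment of P and
   b_l is the error of the trapezoid rule for the integral of P over
   [l, l + 1].  P is concave, with P' = dpow and a curvature curv = - P''
   that is decreasing, so second-order Taylor bounds give
   dpow (l + 1) + curv (l + 1) / 2 <= a_l <= dpow l - curv (l + 1) / 2, and
   the trapezoid error bounds give curv (l + 1) / 12 <= b_l <= curv l / 12.
   As t ^ 2 * curv t is a multiple of P t, it is increasing, which compares
   the curvatures at l - 1, l + 1 and l + 2 up to explicit constant factors.
   Each claim is then a linear inequality between these bounds. *)

Local Open Scope ring_scope.

Section SecondOrderBounds.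
Context {R : realType}.
Implicit Types (f df d2f : R -> R) (a b c m : R).

Lemma ler0_is_derive_le f df a b : a <= b ->
  {in `[a, b], forall x : R, is_derive x 1 f (df x)} ->
  {in `[a, b], forall x : R, df x <= 0} -> f b <= f a.
Proof.
move=> ab fdf df_le0.
have fdf_oo x : x \in `]a, b[ -> is_derive x 1 f (df x).
  by move=> /subset_itv_oo_cc; exact: fdf.
have fcont := derivable_within_continuous
  (fun x xab => @ex_derive _ _ _ _ _ _ _ (fdf x xab)).
have [c cab fdiff] := MVT_segment ab fdf_oo fcont.
by rewrite -subr_le0 fdiff mulr_le0_ge0 ?df_le0 ?subr_ge0.
Qed.

Lemma ger0_is_derive_le f df a b : a <= b ->
  {in `[a, b], forall x : R, is_derive x 1 f (df x)} ->
  {in `[a, b], forall x : R, 0 <= df x} -> f a <= f b.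
Proof.
move=> ab fdf df_ge0.
have := @ler0_is_derive_le (fun x => - f x) (fun x => - df x) a b ab.
rewrite lerN2; apply=> x xab; first exact: is_deriveN (fdf x xab).
by rewrite oppr_le0 df_ge0.
Qed.

Lemma subset_itv_cc {a b c d} : c \in `[a, b] -> d \in `[a, b] ->
  {subset `[c, d] <= `[a, b]}.
Proof.
rewrite !in_itv /= => /andP[ac _] /andP[_ db].
by apply: subitvP; rewrite subitvE !bnd_simp ac db.
Qed.

Section Concave.
Context {f df d2f : R -> R} {a b : R}.
Hypothesis fdf : {in `[a, b], forall x : R, is_derive x 1 f (df x)}.
Hypothesis dfd2f : {in `[a, b], forall x : R, is_derive x 1 df (d2f x)}.

Lemma concave_le_tangent : {in `[a, b], forall x, d2f x <= 0} ->
  {in `[a, b] &, forall c x, f x <= f c + df c * (x - c)}.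
Proof.
move=> d2f_le0 c x cab xab.
have df_nincr y z : y \in `[a, b] -> z \in `[a, b] -> y <= z -> df z <= df y.
  move=> yab zab yz; have sub := subset_itv_cc yab zab.
  by apply: ler0_is_derive_le yz _ _ => w /sub; [exact: dfd2f | exact: d2f_le0].
pose g z := f z - df c * z.
have gdg z : z \in `[a, b] -> is_derive z 1 g (df z - df c).
  move=> zab; have ? := fdf z zab.
  by apply: is_derive_eq; rewrite /GRing.scale /=; ring.
suff : g x <= g c by rewrite /g; lra.
have [xc|cx] := leP x c.
- have sub_xc := subset_itv_cc xab cab.
  apply: (@ger0_is_derive_le g (fun z => df z - df c) x c xc) => z zxc.
    exact/gdg/sub_xc.
  by rewrite subr_ge0 df_nincr ?sub_xc ?(itvP zxc).
- have sub_cx := subset_itv_cc cab xab.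
  apply: (@ler0_is_derive_le g (fun z => df z - df c) c x (ltW cx)) => z zcx.
    exact/gdg/sub_cx.
  by rewrite subr_le0 df_nincr ?sub_cx ?(itvP zcx).
Qed.

End Concave.

Section Taylor.
Context {f df d2f : R -> R} {a b m : R}.
Hypothesis ab : a <= b.
Hypothesis fdf : {in `[a, b], forall x : R, is_derive x 1 f (df x)}.
Hypothesis dfd2f : {in `[a, b], forall x : R, is_derive x 1 df (d2f x)}.
Hypothesis d2f_le : {in `[a, b], forall x, d2f x <= - m}.

(* g'' = d2f + m <= 0: expand the tangent bound of g at a and at b. *)
Let g x := f x + m * x ^+ 2 / 2.
Let dg x := df x + m * x.

Let aab : a \in `[a, b]. Proof. by rewrite bound_itvE. Qed.
Let bab : b \in `[a, b]. Proof. by rewrite bound_itvE. Qed.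

Let g_tangent : {in `[a, b] &, forall c x, g x <= g c + dg c * (x - c)}.
Proof.
apply: (concave_le_tangent (d2f := fun x => d2f x + m)) => x xab.
- have ? := fdf x xab.
  by apply: is_derive_eq; rewrite /dg /GRing.scale /=; field.
- have ? := dfd2f x xab.
  by rewrite /dg; apply: is_derive_eq; rewrite /GRing.scale /=; field.
- by rewrite -lerBrDr sub0r d2f_le.
Qed.

Lemma taylor2_left_ub :
  f b <= f a + df a * (b - a) - m * (b - a) ^+ 2 / 2.
Proof. by have := g_tangent a b aab bab; rewrite /g /dg; lra. Qed.

Lemma taylor2_right_ub :
  f a <= f b - df b * (b - a) - m * (b - a) ^+ 2 / 2.
Proof. by have := g_tangent b a bab aab; rewrite /g /dg; lra. Qed.

End Taylor.

Section Trapezoid.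
Context {F f df d2f : R -> R} {a b : R}.
Hypothesis ab : a <= b.
Hypothesis Ff : {in `[a, b], forall x : R, is_derive x 1 F (f x)}.
Hypothesis fdf : {in `[a, b], forall x : R, is_derive x 1 f (df x)}.
Hypothesis dfd2f : {in `[a, b], forall x : R, is_derive x 1 df (d2f x)}.

Lemma trapezoid_error_lb {m : R} : {in `[a, b], forall x, d2f x <= - m} ->
  m * (b - a) ^+ 3 / 12 <= F b - F a - (b - a) * (f a + f b) / 2.
Proof.
move=> d2f_le.
(* h' x is half the remainder of the Taylor bound on [a, x] expanded at x. *)
pose h x := F x - F a - (x - a) * (f a + f x) / 2 - m * (x - a) ^+ 3 / 12.
suff : h a <= h b by rewrite /h; lra.
have aab : a \in `[a, b] by rewrite bound_itvE.
apply: (@ger0_is_derive_le h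
  (fun x => (f x - f a - df x * (x - a) - m * (x - a) ^+ 2 / 2) / 2) a b ab).
- move=> x xab; have ? := Ff x xab; have ? := fdf x xab.
  by rewrite /h; apply: is_derive_eq; rewrite /GRing.scale /=; field.
- move=> x xab; have sub := subset_itv_cc aab xab.
  have ax : a <= x by rewrite (itvP xab).
  suff : f a <= f x - df x * (x - a) - m * (x - a) ^+ 2 / 2 by lra.
  by apply: taylor2_right_ub ax _ _ _ => y /sub;
    [exact: fdf | exact: dfd2f | exact: d2f_le].
Qed.

End Trapezoid.

Lemma trapezoid_error_ub {F f df d2f : R -> R} {a b M : R} : a <= b ->
  {in `[a, b], forall x : R, is_derive x 1 F (f x)} ->
  {in `[a, b], forall x : R, is_derive x 1 f (df x)} ->
  {in `[a, b], forall x : R, is_derive x 1 df (d2f x)} ->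
  {in `[a, b], forall x, - M <= d2f x} ->
  F b - F a - (b - a) * (f a + f b) / 2 <= M * (b - a) ^+ 3 / 12.
Proof.
move=> ab Ff fdf dfd2f d2f_ge.
suff : - M * (b - a) ^+ 3 / 12 <= - F b - - F a - (b - a) * (- f a + - f b) / 2.
  by lra.
apply: (trapezoid_error_lb (F := fun x => - F x) (f := fun x => - f x)
  (df := fun x => - df x) (d2f := fun x => - d2f x)) => // x xab.
- exact: is_deriveN (Ff x xab).
- exact: is_deriveN (fdf x xab).
- exact: is_deriveN (dfd2f x xab).
- by rewrite opprK lerNl d2f_ge.
Qed.

End SecondOrderBounds.

Section PowerFacts.
Context {R : realType}.

Lemma le0_ger_powR (r y z : R) : r <= 0 -> 0 < y -> y <= z -> z `^ r <= y `^ r.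
Proof.
move=> r0 y0 yz; have z0 := lt_le_trans y0 yz.
rewrite -[r]opprK (powRN z) (powRN y) lef_pV2 ?posrE ?powR_gt0 //.
apply: (ge0_ler_powR (r := - r)) => //; rewrite ?nnegrE ?oppr_ge0 //; exact: ltW.
Qed.

Lemma mul_powR (r y : R) : 0 < y -> y * y `^ r = y `^ (r + 1).
Proof.
move=> y0; rewrite powRD; last by rewrite (gt_eqF y0) implybT.
by rewrite powRr1 ?ltW // mulrC.
Qed.

End PowerFacts.

Section Coefficients.
Context {R : realType}.
Variable al : R.
Hypotheses (al_gt0 : 0 < al) (al_lt1 : al < 1).
Implicit Types (x y z : R) (n j s : nat).

Definition dpow (y : R) := (1 - al) * y `^ (- al).

Definition curv (y : R) := al * (1 - al) * y `^ (- al - 1).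

Lemma is_derive_powR2 y : 0 < y ->
  is_derive y 1 (fun x => (2 - al)^-1 * x `^ (2 - al)) (y `^ (1 - al)).
Proof.
move=> y0; have al2 : 0 < 2 - al by rewrite subr_gt0 (lt_trans al_lt1) ?ltr1n.
have ? := is_derive1_powR (2 - al) y0.
apply: is_derive_eq; rewrite /GRing.scale /= mulKf ?gt_eqF //.
by congr powR; ring.
Qed.

Lemma is_derive_powR1 y : 0 < y -> is_derive y 1 (fun x => x `^ (1 - al)) (dpow y).
Proof.
move=> y0; apply: is_derive_eq (is_derive1_powR (1 - al) y0) _.
by rewrite /dpow addrAC subrr sub0r.
Qed.

Lemma is_derive_dpow y : 0 < y -> is_derive y 1 dpow (- curv y).
Proof.
move=> y0; have ? := is_derive1_powR (- al) y0.
by rewrite /dpow; apply: is_derive_eq; rewrite /GRing.scale /= /curv; ring.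
Qed.

Lemma dpow_gt0 y : 0 < y -> 0 < dpow y.
Proof. by move=> y0; rewrite mulr_gt0 ?powR_gt0 ?subr_gt0. Qed.

Lemma curv_gt0 y : 0 < y -> 0 < curv y.
Proof. by move=> y0; rewrite !mulr_gt0 ?powR_gt0 ?subr_gt0. Qed.

Lemma dpow_nincr y z : 0 < y -> y <= z -> dpow z <= dpow y.
Proof.
move=> y0 yz; rewrite ler_pM2l ?subr_gt0 // le0_ger_powR //.
by rewrite oppr_le0 ltW.
Qed.

Lemma curv_nincr y z : 0 < y -> y <= z -> curv z <= curv y.
Proof.
move=> y0 yz; rewrite ler_pM2l ?mulr_gt0 ?subr_gt0 // le0_ger_powR //.
by have := al_gt0; lra.
Qed.

Lemma dpowE y : dpow y = (1 - al) / y `^ al.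
Proof. by rewrite /dpow powRN. Qed.

Lemma dpow1 : dpow 1 = 1 - al.
Proof. by rewrite /dpow powR1 mulr1. Qed.

Lemma curv1 : curv 1 = al * (1 - al).
Proof. by rewrite /curv powR1 mulr1. Qed.

Lemma mul_dpow y : 0 < y -> y * dpow y = (1 - al) * y `^ (1 - al).
Proof. by move=> y0; rewrite mulrCA mul_powR // addrC. Qed.

Lemma mul_curv y : 0 < y -> y * curv y = al * dpow y.
Proof. by move=> y0; rewrite mulrCA mul_powR // subrK /dpow mulrA. Qed.

Lemma curv_le_scale y z k : 0 < y -> y <= z -> z <= k * y ->
  curv y <= k ^+ 2 * curv z.
Proof.
move=> y0 yz zky; have z0 := lt_le_trans y0 yz.
have sqr_curv t : 0 < t -> t ^+ 2 * curv t = al * (1 - al) * t `^ (1 - al).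
  by move=> t0; rewrite expr2 -mulrA mul_curv // mulrCA mul_dpow // mulrA.
rewrite -(ler_pM2l (exprn_gt0 2 y0)) [in leRHS]mulrA -exprMn [y * k]mulrC.
apply: (le_trans (_ : _ <= z ^+ 2 * curv z)).
  rewrite !sqr_curv // ler_pM2l ?mulr_gt0 ?subr_gt0 //.
  have al1 : 0 <= 1 - al by rewrite subr_ge0 ltW.
  exact: (ge0_ler_powR al1 (ltW y0) (ltW z0) yz).
apply: ler_wpM2r; first exact/ltW/curv_gt0.
have ky0 : 0 <= k * y := le_trans (ltW z0) zky.
by rewrite ler_sqr ?nnegrE ?(ltW z0).
Qed.

Section UnitInterval.
Variable x : R.
Hypothesis x_gt0 : 0 < x.

Let itv_gt0 y : y \in `[x, x + 1] -> 0 < y.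
Proof. by move=> yx; rewrite (lt_le_trans x_gt0) ?(itvP yx). Qed.

Let x_le : x <= x + 1.
Proof. by rewrite lerDl. Qed.

Let powR1_derive : {in `[x, x + 1], forall y,
  is_derive y 1 (fun t => t `^ (1 - al)) (dpow y)}.
Proof. by move=> y /itv_gt0 /is_derive_powR1. Qed.

Let dpow_derive : {in `[x, x + 1], forall y, is_derive y 1 dpow (- curv y)}.
Proof. by move=> y /itv_gt0 /is_derive_dpow. Qed.

Let powR2_derive : {in `[x, x + 1], forall y,
  is_derive y 1 (fun t => (2 - al)^-1 * t `^ (2 - al)) (y `^ (1 - al))}.
Proof. by move=> y /itv_gt0 /is_derive_powR2. Qed.

Let curv_itv_lb : {in `[x, x + 1], forall y, - curv y <= - curv (x + 1)}.
Proof. by move=> y yx; rewrite lerN2 curv_nincr ?itv_gt0 ?(itvP yx). Qed.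

Let curv_itv_ub : {in `[x, x + 1], forall y, - curv x <= - curv y}.
Proof. by move=> y yx; rewrite lerN2 curv_nincr ?(itvP yx). Qed.

Lemma powR_step_ub :
  (x + 1) `^ (1 - al) <= x `^ (1 - al) + dpow x - curv (x + 1) / 2.
Proof.
by have := taylor2_left_ub x_le powR1_derive dpow_derive curv_itv_lb; lra.
Qed.

Lemma powR_step_lb :
  x `^ (1 - al) <= (x + 1) `^ (1 - al) - dpow (x + 1) - curv (x + 1) / 2.
Proof.
by have := taylor2_right_ub x_le powR1_derive dpow_derive curv_itv_lb; lra.
Qed.

Lemma trapezoid_powR_lb : curv (x + 1) / 12 <=
  (2 - al)^-1 * ((x + 1) `^ (2 - al) - x `^ (2 - al))
  - 2^-1 * ((x + 1) `^ (1 - al) + x `^ (1 - al)).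
Proof.
have := trapezoid_error_lb x_le powR2_derive powR1_derive dpow_derive curv_itv_lb.
by set c := (2 - al)^-1; lra.
Qed.

Lemma trapezoid_powR_ub :
  (2 - al)^-1 * ((x + 1) `^ (2 - al) - x `^ (2 - al))
  - 2^-1 * ((x + 1) `^ (1 - al) + x `^ (1 - al)) <= curv x / 12.
Proof.
have := trapezoid_error_ub x_le powR2_derive powR1_derive dpow_derive curv_itv_ub.
by set c := (2 - al)^-1; lra.
Qed.

End UnitInterval.

Lemma acoef_ub n : (0 < n)%N -> acoef al n <= dpow n%:R - curv n.+1%:R / 2.
Proof. by rewrite -(ltr0n R) /acoef -natr1 => /powR_step_ub; lra. Qed.

Lemma acoef_lb n : (0 < n)%N -> dpow n.+1%:R + curv n.+1%:R / 2 <= acoef al n.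
Proof. by rewrite -(ltr0n R) /acoef -natr1 => /powR_step_lb; lra. Qed.

Lemma bcoef_lb n : (0 < n)%N -> curv n.+1%:R / 12 <= bcoef al n.
Proof. by rewrite -(ltr0n R) /bcoef -[n.+1%:R]natr1 => /trapezoid_powR_lb. Qed.

Lemma bcoef_ub n : (0 < n)%N -> bcoef al n <= curv n%:R / 12.
Proof. by rewrite -(ltr0n R) /bcoef -[n.+1%:R]natr1 => /trapezoid_powR_ub. Qed.

Lemma bcoef_gt0 n : (0 < n)%N -> 0 < bcoef al n.
Proof.
move=> n0; have c0 : 0 < curv n.+1%:R / 12 by rewrite divr_gt0 ?curv_gt0 ?ltr0n.
exact: lt_le_trans c0 (bcoef_lb n n0).
Qed.

Lemma acoef0 : acoef al 0 = 1.
Proof. by rewrite /acoef powR1 powR0 ?subr0 // subr_eq0 gt_eqF. Qed.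

Lemma bcoef0 : bcoef al 0 = al / (2 * (2 - al)).
Proof.
have al2 : 2 - al != 0 by rewrite subr_eq0 gt_eqF // (lt_trans al_lt1) ?ltr1n.
have al1 : 1 - al != 0 by rewrite subr_eq0 gt_eqF.
rewrite /bcoef !powR1 !powR0 // !subr0 addr0 mulr1.
by field.
Qed.

Lemma bcoef0_gt0 : 0 < bcoef al 0.
Proof. by rewrite bcoef0 divr_gt0 // mulr_gt0 // subr_gt0 (lt_trans al_lt1) ?ltr1n. Qed.

Lemma ccoef_last j : (0 < j)%N ->
  ccoef al j j = acoef al j - bcoef al j - bcoef al j.-1.
Proof. by move=> j0; rewrite /ccoef gtn_eqF // eqxx. Qed.

(* As b_l > 0 for l > 0, these two bounds cover every branch of ccoef. *)
Lemma ccoef_lb j s : (0 < s < j)%N ->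
  acoef al s + bcoef al s - bcoef al s.-1 <= ccoef al j s.
Proof.
case/andP=> s0 sj; rewrite /ccoef gtn_eqF // ltn_eqF // sj /=.
case: eqP => // _; have := bcoef_gt0 j (ltn_trans s0 sj); lra.
Qed.

Lemma ccoef_ub j s : (0 < s <= j)%N ->
  ccoef al j s <= acoef al s + bcoef al s + bcoef al s.+1 - bcoef al s.-1.
Proof.
case/andP=> s0 sj; rewrite /ccoef gtn_eqF //.
have := bcoef_gt0 s s0; have := bcoef_gt0 s.+1 isT.
case: eqP => [<-|/eqP sNj]; first lra.
case: eqP => [sj1|_]; first by have -> : j = s.+1 by lia.
by rewrite ltn_neqAle sNj sj /=; lra.
Qed.

Lemma ccoef_last_lt j : (2 <= j)%N -> ccoef al j j < (1 - al) / j%:R `^ al.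
Proof.
case: j => [|[|k]] // _; rewrite ccoef_last // -dpowE.
have := acoef_ub k.+2 isT; have := bcoef_gt0 k.+2 isT.
have := bcoef_gt0 k.+1 isT; have := curv_gt0 _ (ltr0Sn R k.+2).
lra.
Qed.

Lemma ccoef_last_gt j : (2 <= j)%N ->
  11 / 16 * ((1 - al) / j.+1%:R `^ al) < ccoef al j j.
Proof.
case: j => [|[|k]] // _; rewrite ccoef_last // -dpowE /=.
have k0 : 0 <= k%:R :> R by [].
have e1 : k.+1%:R = k%:R + 1 :> R by rewrite natr1.
have e2 : k.+2%:R = k%:R + 2 :> R by rewrite -addn2 natrD.
have e3 : k.+3%:R = k%:R + 3 :> R by rewrite -addn3 natrD.
have c2 : curv k.+2%:R <= (3 / 2) ^+ 2 * curv k.+3%:R.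
  by apply: curv_le_scale; lra.
have c1 : curv k.+1%:R <= 3 ^+ 2 * curv k.+3%:R.
  by apply: curv_le_scale; lra.
have := acoef_lb k.+2 isT; have := bcoef_ub k.+2 isT; have := bcoef_ub k.+1 isT.
have d0 := dpow_gt0 _ (ltr0Sn R k.+2).
have al_d : al * dpow k.+3%:R < dpow k.+3%:R by rewrite gtr_pMl.
have curv_d : 3 * curv k.+3%:R <= al * dpow k.+3%:R.
  rewrite -mul_curv ?ltr0Sn //; apply: ler_wpM2r; last lra.
  exact/ltW/curv_gt0/ltr0Sn.
lra.
Qed.

Lemma ccoef_succ_lt j s : (2 <= s)%N -> (s < j)%N ->
  ccoef al j s.+1 < ccoef al j s.
Proof.
case: s => [|[|k]] // _ kj.
have := ccoef_lb j k.+2 kj; have := ccoef_ub j k.+3 kj.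
have k0 : 0 <= k%:R :> R by [].
have e1 : k.+1%:R = k%:R + 1 :> R by rewrite natr1.
have e3 : k.+3%:R = k%:R + 3 :> R by rewrite -addn3 natrD.
have e4 : k.+4%:R = k%:R + 4 :> R by rewrite -addn4 natrD.
have c1 : curv k.+1%:R <= 3 ^+ 2 * curv k.+3%:R.
  by apply: curv_le_scale; lra.
have c3 : curv k.+3%:R <= (4 / 3) ^+ 2 * curv k.+4%:R.
  by apply: curv_le_scale; lra.
have := curv_gt0 _ (ltr0Sn R k.+2).
have := acoef_lb k.+2 isT; have := acoef_ub k.+3 isT.
have := bcoef_lb k.+2 isT; have := bcoef_ub k.+1 isT.
have := bcoef_ub k.+3 isT; have := bcoef_ub k.+4 isT.
lra.
Qed.

Lemma ccoef0_gt_ccoef2 j : (2 <= j)%N -> ccoef al j 2 < ccoef al j 0.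
Proof.
move=> j2; have := ccoef_ub j 2 j2.
rewrite [ccoef al j 0]/ccoef /= acoef0.
have := acoef_ub 2 isT; have := bcoef_ub 2 isT; have := bcoef_ub 3 isT.
have := bcoef_gt0 1 isT; have := bcoef0_gt0.
have := dpow_nincr _ _ ltr01 (ler1n R 2); rewrite dpow1.
have := curv_nincr _ _ ltr01 (ler1n R 2); have := curv_nincr _ _ ltr01 (ler1n R 3).
rewrite curv1.
have := curv_gt0 _ (ltr0Sn R 2).
have : al * (1 - al) < al by rewrite gtr_pMr // ltrBlDr ltrDl.
lra.
Qed.

Lemma ccoef_combination_gt0 j : (2 <= j)%N ->
  0 < ccoef al j 0 + 3 * ccoef al j 1 - 4 * ccoef al j 2.
Proof.
move=> j2; have al2 : 0 < 2 - al by rewrite subr_gt0 (lt_trans al_lt1) ?ltr1n.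
have pow2_le : 2 `^ (1 - al) <= 2 - al.
  have := acoef_ub 1 isT; rewrite /acoef powR1 dpow1.
  by have := curv_gt0 _ (ltr0Sn R 1); lra.
have dpow2_le : dpow 2 <= (1 - al) * (2 - al) / 2.
  by rewrite ler_pdivlMr // mulrC mul_dpow // ler_pM2l ?subr_gt0.
have key : 0 < 1 - 2 * bcoef al 0 - (1 - al) * (2 - al) / 2 - 2 * curv 1 / 3.
  have -> : 1 - 2 * bcoef al 0 - (1 - al) * (2 - al) / 2 - 2 * curv 1 / 3 =
      al * (1 - al) * (4 + al) / (6 * (2 - al)).
    by rewrite bcoef0 curv1; field; rewrite gt_eqF.
  have al1 : 0 < 1 - al by rewrite subr_gt0.
  have al4 : 0 < 4 + al by rewrite addr_gt0.
  by rewrite divr_gt0 ?mulr_gt0.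
have := ccoef_lb j 1 j2; have := ccoef_ub j 2 j2.
rewrite [ccoef al j 0]/ccoef /= acoef0.
have := acoef_lb 1 isT; have := acoef_ub 2 isT.
have := bcoef_gt0 1 isT; have := bcoef_ub 2 isT; have := bcoef_ub 3 isT.
have := curv_nincr _ _ ltr01 (ler1n R 2); have := curv_nincr _ _ ltr01 (ler1n R 3).
have := curv_gt0 _ (ltr0Sn R 1); have := curv_gt0 _ (ltr0Sn R 2).
lra.
Qed.

End Coefficients.

Theorem lemma3 (R : realType) (alpha : R) (j : nat) :
  0 < alpha -> alpha < 1 -> (2 <= j)%N ->
  [/\ (11 / 16) * ((1 - alpha) / powR (j.+1%:R) alpha) < ccoef alpha j j,
      ccoef alpha j j < (1 - alpha) / powR (j%:R) alpha,
      ccoef alpha j 0 > ccoef alpha j 2,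
      (forall s : nat, (2 <= s)%N -> (s <= j.-1)%N ->
         ccoef alpha j s > ccoef alpha j s.+1)
    & ccoef alpha j 0 + 3 * ccoef alpha j 1 - 4 * ccoef alpha j 2 > 0].
Proof.
move=> al0 al1 j2; split.
- exact: ccoef_last_gt.
- exact: ccoef_last_lt.
- exact: ccoef0_gt_ccoef2.
- by move=> s s2 sj; apply: ccoef_succ_lt => //; lia.
- exact: ccoef_combination_gt0.
Qed.
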